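(* Let $1\le\ell\le k-1$ be integers with $k-\ell$ not dividing $k$ and let $\varepsilon>0$. Then there is $t_0$ such that for every integer $t\ge t_0$ there is a $k$-partite $k$-uniform $\ell$-cycle on $m=t(k-\ell)$ vertices whose parts have sizes $\alpha_1 m,\dots,\alpha_k m$ with $|\alpha_1-\lambda(k,\ell)|\le\varepsilon$ and $|\alpha_i-(1-\lambda(k,\ell))/(k-1)|\le\varepsilon$ for all $2\le i\le k$.
   Context: A $k$-uniform $\ell$-cycle ($0\le\ell<k$) is a $k$-graph whose vertices can be cyclically ordered so that every edge consists of $k$ cyclically consecutive vertices and consecutive edges intersect in exactly $\ell$ vertices. A $k$-graph is $k$-partite (with parts $V_1,\dots,V_k$) if its vertex set is partitioned into $V_1,\dots,V_k$ such that every edge contains exactly one vertex from each part. Here $\lambda(k,\ell)=\dfrac{1}{\lceil k/(k-\ell)\rceil(k-\ell)}$. *)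

From HB Require Import structures.
From mathcomp Require Import all_boot all_order all_algebra.
From mathcomp Require Import reals.
Set Implicit Arguments. Unset Strict Implicit. Unset Printing Implicit Defensive.
Import Order.TTheory GRing.Theory Num.Theory.

Definition cyc_edge (m k l j : nat) : {set 'I_m} :=
  [set v : 'I_m | [exists i : 'I_k, val v == (j * (k - l) + i) %% m]].

(* The hypergraph with vertex set 'I_m (m = t(k-l)) and edges cyc_edge j,
   j < t, is a k-uniform l-cycle: every edge has exactly k vertices and
   consecutive edges (cyclically: edge t = edge 0) meet in exactly l vertices. *)
Definition kpartite_lcycle (k l t : nat) (sizes : 'I_k -> nat) : Prop :=
  let m := t * (k - l) in
  (forall j, j < t ->
     #|cyc_edge m k l j| = k /\
     #|cyc_edge m k l j :&: cyc_edge m k l j.+1| = l) /\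
  exists col : 'I_m -> 'I_k,
    (forall j, j < t -> forall c : 'I_k,
        #|[set v in cyc_edge m k l j | col v == c]| = 1) /\
    (forall c : 'I_k, #|[set v | col v == c]| = sizes c).
Arguments kpartite_lcycle : clear implicits.

Definition ceil_div (a b : nat) : nat := (a + b.-1) %/ b.

Definition lambda_kl {R : realType} (k l : nat) : R :=
  (1 / ((ceil_div k (k - l) * (k - l))%:R))%R.

From HB Require Import structures.
From mathcomp Require Import all_boot all_order all_algebra.
From mathcomp Require Import reals.
From mathcomp Require Import zify.
From mathcomp.algebra_tactics Require Import ring lra.

Set Implicit Arguments. Unset Strict Implicit. Unset Printing Implicit Defensive.
Import Order.TTheory GRing.Theory Num.Theory.

(* Write d = k - l and k = (s - 1) d + q with 0 < q < d, so that s = ceil(k/d).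
   Cut the cyclically ordered vertices 0, ..., td - 1 into t blocks of d
   consecutive vertices: edge j covers the blocks j, ..., j + s - 2 and the
   first q vertices of block j + s - 1.  Group the blocks into a runs of s
   blocks followed by b runs of s - 1 blocks (as + b(s - 1) = t) and put one
   vertex of the last block of every run into part 0, at offset 0 if the run
   is long and at offset q if it is short; then every edge meets part 0
   exactly once.  The remaining vertices are dealt to parts 1, ..., k - 1
   cyclically in their natural order, which is consistent around the cycle
   when k - 1 divides td - (a + b); each edge sees k - 1 consecutive such
   vertices, hence one in each part.  Part 0 has a + b = (t + b)/s vertices,
   a fraction about 1/(sd) = lambda(k,l), and the other parts share the rest
   equally.  A suitable a + b, in the window [t/s, t/(s - 1)] and in the right
   residue class modulo k - 1, exists as soon as t >= (k + 1) s^2. *)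

Lemma modn_lt_double x K : x < K + K -> x %% K = (if x < K then x else x - K).
Proof.
case: ifP => x_lt x_lt2; first by rewrite modn_small.
have -> : x = (x - K) + K by lia.
by rewrite modnDr modn_small; lia.
Qed.

Lemma iota_shift m n : iota m n = map (addn m) (iota 0 n).
Proof. by rewrite -iotaDl addn0. Qed.

Lemma count_modn_iota K c M : c < K -> count (fun x => x %% K == c) (iota 0 (M * K)) = M.
Proof.
move=> c_lt; elim: M => [|M IH]; first by rewrite mul0n.
rewrite mulSnr iotaD count_cat IH add0n iota_shift count_map -addn1; congr (_ + _).
have <- : count (pred1 c) (iota 0 K) = 1.
  by rewrite count_uniq_mem ?iota_uniq // mem_iota c_lt.
by apply: eq_in_count => x; rewrite mem_iota /= => x_lt; rewrite modnMDl modn_small.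
Qed.

Section Marks.
Variables s a b t : nat.
Hypothesis s_ge2 : 2 <= s.
Hypothesis t_split : a * s + b * s.-1 = t.
Hypothesis s_le_t : s <= t.

(* The blocks 0, ..., t-1 are cut into a runs of length s followed by b runs
   of length s-1; the last block of each run is marked. *)
Definition long_mark f := (f < a * s) && (f %% s == s.-1).
Definition short_mark f := [&& a * s <= f, f < t & (f - a * s) %% s.-1 == s.-2].

Definition long_gap w := s.-1 - w %% s.
Definition short_gap w := s.-2 - (w - a * s) %% s.-1.

Lemma long_mark_next w : w < a * s -> long_mark ((w + long_gap w) %% t).
Proof.
move=> w_lt; rewrite /long_gap.
have w_mod := ltn_pmod w (ltnW s_ge2).
have w_div := divn_eq w s.
have : (w %/ s).+1 * s <= a * s by rewrite leq_mul2r ltn_divLR ?w_lt ?orbT //; lia.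
rewrite mulSn => q_le.
rewrite modn_small; last lia.
rewrite /long_mark; apply/andP; split; first lia.
have -> : w + (s.-1 - w %% s) = w %/ s * s + s.-1 by lia.
by rewrite modnMDl modn_small //; lia.
Qed.

Lemma short_mark_next w : a * s <= w -> w < t -> short_mark ((w + short_gap w) %% t).
Proof.
move=> w_ge w_lt; rewrite /short_gap.
have w_mod : (w - a * s) %% s.-1 < s.-1 by rewrite ltn_mod; lia.
have w_div := divn_eq (w - a * s) s.-1.
have : ((w - a * s) %/ s.-1).+1 * s.-1 <= b * s.-1.
  by rewrite leq_mul2r ltn_divLR ?orbT //; lia.
rewrite mulSn => q_le.
rewrite modn_small; last lia.
rewrite /short_mark; apply/and3P; split; [lia|lia|].
have -> : w + (s.-2 - (w - a * s) %% s.-1) - a * s =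
          (w - a * s) %/ s.-1 * s.-1 + s.-2 by lia.
by rewrite modnMDl modn_small //; lia.
Qed.

Lemma long_mark_window w dl : w < t -> dl <= s.-1 -> long_mark ((w + dl) %% t) ->
  w < a * s /\ dl = long_gap w.
Proof.
move=> w_lt dl_le; rewrite /long_mark /long_gap modn_lt_double; last lia.
case: ifP => [wdl_lt /andP [wdl_lt_as /eqP]|_ /andP []]; last by rewrite modn_small; lia.
rewrite {1}(divn_eq w s) -addnA modnMDl modn_lt_double; last first.
  by have := ltn_pmod w (ltnW s_ge2); lia.
case: ifP => _; lia.
Qed.

Lemma short_mark_window w dl : w < t -> dl <= s.-2 -> short_mark ((w + dl) %% t) ->
  a * s <= w /\ dl = short_gap w.
Proof.
move=> w_lt dl_le; rewrite /short_mark /short_gap modn_lt_double; last lia.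
case: ifP => [wdl_lt /and3P [wdl_ge _ /eqP]|_ /and3P []]; last by rewrite modn_small; lia.
case: (leqP (a * s) w) => [w_ge|w_lt']; last by rewrite modn_small; lia.
have r_lt : (w - a * s) %% s.-1 < s.-1 by rewrite ltn_mod; lia.
have -> : w + dl - a * s = (w - a * s) %/ s.-1 * s.-1 + ((w - a * s) %% s.-1 + dl).
  by have := divn_eq (w - a * s) s.-1; lia.
rewrite modnMDl modn_lt_double; last lia.
case: ifP => _; lia.
Qed.

Lemma count_long_mark : count long_mark (iota 0 t) = a.
Proof.
rewrite -t_split iotaD count_cat add0n (iota_shift (a * s)) count_map.
rewrite (eq_count (a2 := pred0) (a1 := preim _ _)) ?count_pred0 ?addn0; last first.
  by move=> x /=; rewrite /long_mark ltnNge leq_addr.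
rewrite -[RHS](@count_modn_iota s s.-1 a); last lia.
by apply: eq_in_count => x; rewrite mem_iota /long_mark => /andP [_ ->].
Qed.

Lemma count_short_mark : count short_mark (iota 0 t) = b.
Proof.
rewrite -[in iota _ t]t_split iotaD count_cat add0n (iota_shift (a * s)) count_map.
rewrite (eq_in_count (a2 := pred0) (a1 := short_mark)) ?count_pred0 ?add0n; last first.
  by move=> x; rewrite mem_iota /short_mark => x_lt; have -> : (a * s <= x) = false by lia.
rewrite -[RHS](@count_modn_iota s.-1 s.-2 b); last lia.
apply: eq_in_count => x; rewrite mem_iota /= /short_mark => x_lt.
have -> : (a * s <= 0 + a * s + x) = true by lia.
have -> : (a * s + x < t) = true by lia.
by rewrite addKn.
Qed.

End Marks.

Lemma count_block_iota d c T (P : pred nat) : c < d ->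
  count (fun y => (y %% d == c) && P (y %/ d)) (iota 0 (T * d)) = count P (iota 0 T).
Proof.
move=> c_lt; have d_gt0 : 0 < d by lia.
elim: T => [|T IH]; first by rewrite mul0n.
rewrite mulSnr iotaD count_cat IH -addn1 iotaD count_cat add0n; congr (_ + _).
rewrite (iota_shift (T * d)) count_map /= addn0.
transitivity (count (fun x => (x == c) && P T) (iota 0 d)).
  apply: eq_in_count => x; rewrite mem_iota /= => x_lt.
  by rewrite modnMDl divnMDl // modn_small // divn_small // addn0.
case: (P T); last by rewrite (eq_count (a2 := pred0)) ?count_pred0 // => x /=; rewrite andbF.
rewrite (eq_count (a2 := pred1 c)) => [|x /=]; last by rewrite andbT.
by rewrite count_uniq_mem ?iota_uniq // mem_iota c_lt.
Qed.

Section ZeroVertices.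
Variables d q s a b t : nat.
Hypothesis s_ge2 : 2 <= s.
Hypothesis t_split : a * s + b * s.-1 = t.
Hypothesis s_le_t : s <= t.
Hypothesis q_gt0 : 0 < q.
Hypothesis q_lt_d : q < d.

Definition zero_vertex y := let e := (y %/ d) %% t in
  ((y %% d == 0) && long_mark s a e) || ((y %% d == q) && short_mark s a t e).

Definition zero_offset w := if w < a * s then long_gap s w * d else short_gap s a w * d + q.

Lemma zero_offset_lt w : zero_offset w < s.-1 * d + q.
Proof.
rewrite /zero_offset /long_gap /short_gap; case: ifP => _.
  have : (s.-1 - w %% s) * d <= s.-1 * d by rewrite leq_mul2r; lia.
  lia.
have : (s.-2 - (w - a * s) %% s.-1) * d <= s.-2 * d by rewrite leq_mul2r; lia.
have : s.-2 * d + d = s.-1 * d by rewrite -mulSnr; congr (_ * _); lia.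
lia.
Qed.

Lemma zero_vertex_offset j : zero_vertex (j * d + zero_offset (j %% t)).
Proof.
have d_gt0 : 0 < d by lia.
have w_lt : j %% t < t by rewrite ltn_mod; lia.
rewrite /zero_vertex /zero_offset; case: ifP => [w_lt_as|w_ge_as].
  rewrite divnMDl // modnMDl mulnK // modnMl eqxx /= -modnDml.
  by rewrite (long_mark_next s_ge2 t_split s_le_t).
rewrite divnMDl // modnMDl divnMDl // (divn_small q_lt_d) modnMDl (modn_small q_lt_d).
rewrite addn0 eqxx orbC /= -modnDml.
by rewrite (short_mark_next s_ge2 t_split s_le_t) //; lia.
Qed.

Lemma zero_vertex_offsetE j i :
  i < s.-1 * d + q -> zero_vertex (j * d + i) -> i = zero_offset (j %% t).
Proof.
move=> i_lt; have d_gt0 : 0 < d by lia.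
have w_lt : j %% t < t by rewrite ltn_mod; lia.
have i_div := divn_eq i d.
rewrite /zero_vertex /zero_offset divnMDl // modnMDl -modnDml.
case/orP => /andP [/eqP i_mod mark].
- have : i %/ d * d < s * d.
    have : s.-1 * d + d = s * d by rewrite -mulSnr; congr (_ * _); lia.
    lia.
  rewrite ltn_mul2r => /andP [_ i_div_lt].
  have i_div_le : i %/ d <= s.-1 by lia.
  have [w_lt_as gapE] := long_mark_window s_ge2 t_split s_le_t w_lt i_div_le mark.
  by rewrite w_lt_as -gapE {1}i_div i_mod addn0.
- have : i %/ d * d < s.-1 * d by lia.
  rewrite ltn_mul2r => /andP [_ i_div_lt].
  have i_div_le : i %/ d <= s.-2 by lia.
  have [w_ge_as gapE] := short_mark_window s_ge2 t_split s_le_t w_lt i_div_le mark.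
  by rewrite ltnNge w_ge_as -gapE {1}i_div i_mod.
Qed.

Lemma zero_vertex_periodic y : zero_vertex (y + t * d) = zero_vertex y.
Proof.
have d_gt0 : 0 < d by lia.
by rewrite /zero_vertex divnDMl // modnDr [y + _]addnC modnMDl.
Qed.

Lemma count_zero_vertex : count zero_vertex (iota 0 (t * d)) = a + b.
Proof.
have d_gt0 : 0 < d by lia.
rewrite -(count_long_mark s_ge2 t_split s_le_t) -(count_short_mark s_ge2 t_split s_le_t).
rewrite -(count_block_iota t _ d_gt0) -(count_block_iota t _ q_lt_d) -count_predUI.
rewrite (eq_count (a2 := pred0) (a1 := predI _ _)) ?count_pred0 ?addn0 => [|y /=]; last first.
  by case: eqP => //= ->; rewrite eq_sym (gtn_eqF q_gt0) andbF.
apply: eq_in_count => y; rewrite mem_iota add0n /zero_vertex /= => y_lt.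
by rewrite (modn_small (_ : y %/ d < t)) // ltn_divLR.
Qed.

End ZeroVertices.

Lemma count_rank_iota (P Q : pred nat) M :
  count (fun y => P y && Q (count P (iota 0 y))) (iota 0 M) =
  count Q (iota 0 (count P (iota 0 M))).
Proof.
elim: M => [|M IH] //.
rewrite -addn1 !iotaD !count_cat IH /= add0n.
case: (P M) => /=; last by rewrite !addn0.
by rewrite addn1 -addn1 iotaD count_cat /= addn0.
Qed.

Section Colouring.
Variables k d q s a b t : nat.
Hypothesis s_ge2 : 2 <= s.
Hypothesis t_split : a * s + b * s.-1 = t.
Hypothesis s_le_t : s <= t.
Hypothesis k_split : k = s.-1 * d + q.
Hypothesis q_gt0 : 0 < q.
Hypothesis q_lt_d : q < d.
Hypothesis k1_dvd : k.-1 %| t * d - (a + b).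

Local Notation Z := (zero_vertex d q s a t).

Definition nonzero_rank y := count (predC Z) (iota 0 y).
Definition colour y := if Z y then 0 else (nonzero_rank y %% k.-1).+1.

Lemma nonzero_rank_period : nonzero_rank (t * d) = t * d - (a + b).
Proof.
rewrite /nonzero_rank -(count_zero_vertex s_ge2 t_split s_le_t q_gt0 q_lt_d).
by have := count_predC Z (iota 0 (t * d)); rewrite size_iota; lia.
Qed.

Lemma nonzero_rank_shift y :
  nonzero_rank (y + t * d) = nonzero_rank (t * d) + nonzero_rank y.
Proof.
rewrite /nonzero_rank addnC iotaD count_cat add0n (iota_shift (t * d)) count_map.
congr (_ + _); apply: eq_count => x /=.
by rewrite addnC (zero_vertex_periodic s_ge2 t_split s_le_t q_gt0 q_lt_d).
Qed.

Lemma colour_periodic y : colour (y + t * d) = colour y.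
Proof.
rewrite /colour (zero_vertex_periodic s_ge2 t_split s_le_t q_gt0 q_lt_d).
by rewrite nonzero_rank_shift nonzero_rank_period -modnDml (eqP k1_dvd).
Qed.

Lemma colour_modn y : colour (y %% (t * d)) = colour y.
Proof.
rewrite [in RHS](divn_eq y (t * d)) addnC; elim: (y %/ (t * d)) => [|n IH].
  by rewrite mul0n addn0.
by rewrite mulSnr addnA colour_periodic.
Qed.

Lemma colour_lt y : colour y < k.
Proof.
rewrite /colour; case: (Z y); first by rewrite k_split addn_gt0 q_gt0 orbT.
have d_le : d <= s.-1 * d by rewrite leq_pmull; lia.
have : nonzero_rank y %% k.-1 < k.-1 by rewrite ltn_mod; lia.
lia.
Qed.

Lemma nonzero_rank_window j i1 i2 : i1 < i2 < k ->
  ~~ Z (j * d + i1) -> ~~ Z (j * d + i2) ->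
  nonzero_rank (j * d + i1) < nonzero_rank (j * d + i2) < nonzero_rank (j * d + i1) + k.-1.
Proof.
move=> /andP [i12 i2_lt] nz1 nz2.
set x := j * d + i1; set D := count (predC Z) (iota x (i2 - i1)).
have rankE : nonzero_rank (j * d + i2) = nonzero_rank x + D.
  by rewrite /nonzero_rank /D -count_cat -iotaD /x -addnA subnKC // ltnW.
rewrite rankE ltn_add2l -{1}(addn0 (nonzero_rank x)) ltn_add2l.
have D_gt0 : 0 < D by rewrite /D -[i2 - i1]prednK ?subn_gt0 //= nz1.
have D_sizeE : D + count Z (iota x (i2 - i1)) = i2 - i1.
  by rewrite /D addnC count_predC size_iota.
set o := zero_offset d q s a (j %% t).
have o_lt : o < k by rewrite k_split (zero_offset_lt s_ge2 t_split s_le_t q_gt0 q_lt_d).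
have Zo := zero_vertex_offset s_ge2 t_split s_le_t q_gt0 q_lt_d j.
have [o_in|o_out] := boolP (i1 <= o < i2).
  have : 0 < count Z (iota x (i2 - i1)).
    rewrite -has_count; apply/hasP; exists (j * d + o) => //.
    by rewrite mem_iota /x; lia.
  by rewrite D_gt0; lia.
have o_ne2 : o != i2 by apply: contraNneq nz2 => <-.
by rewrite D_gt0; lia.
Qed.

Lemma colour_window_inj j i1 i2 : i1 < k -> i2 < k ->
  colour (j * d + i1) = colour (j * d + i2) -> i1 = i2.
Proof.
wlog i12 : i1 i2 / i1 <= i2.
  move=> H i1_lt i2_lt col_eq; case: (leqP i1 i2) => [i12|/ltnW i21]; first exact: H.
  exact/esym/H.
move=> i1_lt i2_lt; rewrite /colour.
case Z1: (Z (j * d + i1)); case Z2: (Z (j * d + i2)) => //= col_eq.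
- rewrite k_split in i1_lt i2_lt.
  rewrite (zero_vertex_offsetE s_ge2 t_split s_le_t q_gt0 q_lt_d i1_lt Z1).
  by rewrite (zero_vertex_offsetE s_ge2 t_split s_le_t q_gt0 q_lt_d i2_lt Z2).
- move: col_eq => [/eqP]; case: (ltngtP i1 i2) => [i_lt|i_gt|//]; last by lia.
  have := @nonzero_rank_window j i1 i2; rewrite i_lt i2_lt Z1 Z2 => /(_ isT isT isT).
  move=> /andP [r_lt r_ub]; rewrite -(subnKC (ltnW r_lt)) -{1}[nonzero_rank _]addn0.
  by rewrite eqn_modDl mod0n modn_small; lia.
Qed.

Lemma count_colour0 : count (fun y => colour y == 0) (iota 0 (t * d)) = a + b.
Proof.
rewrite -(count_zero_vertex s_ge2 t_split s_le_t q_gt0 q_lt_d).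
by apply: eq_count => y; rewrite /colour; case: (Z y).
Qed.

Lemma count_colour c : 0 < c -> c < k ->
  count (fun y => colour y == c) (iota 0 (t * d)) = (t * d - (a + b)) %/ k.-1.
Proof.
move=> c_gt0 c_lt.
transitivity (count (fun r => r %% k.-1 == c.-1) (iota 0 (nonzero_rank (t * d)))).
  rewrite /nonzero_rank -count_rank_iota; apply: eq_count => y /=.
  rewrite /colour; case: (Z y) => /=; first by rewrite eq_sym gtn_eqF.
  by rewrite -[c in LHS](prednK c_gt0) eqSS.
by rewrite nonzero_rank_period -{1}(divnK k1_dvd) count_modn_iota //; lia.
Qed.

End Colouring.

Lemma card_set_val_iota m (P : pred nat) : #|[set v : 'I_m | P (val v)]| = count P (iota 0 m).
Proof.
rewrite cardsE cardE -val_enum_ord count_map /enum_mem size_filter /=.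
by rewrite (eq_filter (a2 := predT)) // filter_predT.
Qed.

Section CycleEdges.
Variables m k l : nat.
Hypothesis l_lt_k : l < k.
Hypothesis m_ge : k + (k - l) <= m.

Let m_gt0 : 0 < m. Proof. lia. Qed.

Definition edge_vertex j (i : nat) : 'I_m := Ordinal (ltn_pmod (j * (k - l) + i) m_gt0).

Lemma edge_vertex_inj j i1 i2 : i1 < k + (k - l) -> i2 < k + (k - l) ->
  edge_vertex j i1 = edge_vertex j i2 -> i1 = i2.
Proof.
move=> i1_lt i2_lt /(congr1 val) /= /eqP.
by rewrite eqn_modDl !modn_small ?(leq_trans i1_lt) ?(leq_trans i2_lt) // => /eqP.
Qed.

Lemma cyc_edgeE j : cyc_edge m k l j = [set edge_vertex j i | i : 'I_k].
Proof.
apply/setP => v; rewrite inE; apply/existsP/imsetP => [[i /eqP vE]|[i _ ->]].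
  by exists i => //; apply: val_inj.
by exists i.
Qed.

Lemma edge_vertex_ord_inj j : injective (fun i : 'I_k => edge_vertex j i).
Proof.
by move=> i1 i2 /edge_vertex_inj eq12; apply/val_inj/eq12; exact: ltn_addr (ltn_ord _).
Qed.

Lemma card_cyc_edge j : #|cyc_edge m k l j| = k.
Proof. by rewrite cyc_edgeE card_imset ?card_ord //; apply: edge_vertex_ord_inj. Qed.

Lemma cyc_edge_meetE j :
  cyc_edge m k l j :&: cyc_edge m k l j.+1 = [set edge_vertex j (k - l + i) | i : 'I_l].
Proof.
have shiftE i : edge_vertex j.+1 i = edge_vertex j (k - l + i).
  by apply: val_inj; rewrite /= mulSnr addnA.
apply/setP => v; rewrite inE !cyc_edgeE; apply/andP/imsetP.
  case=> /imsetP [i1 _ ->] /imsetP [i2 _]; rewrite shiftE => /edge_vertex_inj.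
  move=> /(_ (ltn_addr _ (ltn_ord i1))) eq12.
  have i1E : i1 = k - l + i2 :> nat by apply: eq12; have := ltn_ord i2; lia.
  have i2_lt : i2 < l by have := ltn_ord i1; lia.
  by exists (Ordinal i2_lt); rewrite //= i1E.
case=> i _ ->; split; apply/imsetP.
  have i_lt : k - l + i < k by have := ltn_ord i; lia.
  by exists (Ordinal i_lt).
have i_lt : i < k by have := ltn_ord i; lia.
by exists (Ordinal i_lt) => //; rewrite shiftE.
Qed.

Lemma card_cyc_edge_meet j : #|cyc_edge m k l j :&: cyc_edge m k l j.+1| = l.
Proof.
rewrite cyc_edge_meetE card_imset ?card_ord // => i1 i2 /edge_vertex_inj eq12.
move: (ltn_ord i1) (ltn_ord i2) => i1_lt i2_lt.
by apply/val_inj/eqP; rewrite -(eqn_add2l (k - l)) eq12 //; lia.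
Qed.

Variable col : 'I_m -> 'I_k.
Hypothesis col_edge_inj : forall j, injective (fun i : 'I_k => col (edge_vertex j i)).

Lemma cyc_edge_rainbow j c : #|[set v in cyc_edge m k l j | col v == c]| = 1.
Proof.
pose f (i : 'I_k) := edge_vertex j i.
have -> : [set v in cyc_edge m k l j | col v == c] = f @: ((col \o f) @^-1: [set c]).
  apply/setP => v; rewrite cyc_edgeE !inE; apply/andP/imsetP.
    by case=> /imsetP [i _ ->] colE; exists i; rewrite // !inE.
  by case=> i; rewrite !inE => colE ->; rewrite imset_f.
rewrite card_imset; last exact: edge_vertex_ord_inj.
by rewrite card_preimset ?cards1 //; apply: col_edge_inj.
Qed.

End CycleEdges.

Lemma kpartite_lcycle_colouring k l t (F : nat -> nat) (sizes : 'I_k -> nat) :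
  l < k -> k + (k - l) <= t * (k - l) ->
  (forall y, F y < k) -> (forall y, F (y %% (t * (k - l))) = F y) ->
  (forall j i1 i2, i1 < k -> i2 < k ->
     F (j * (k - l) + i1) = F (j * (k - l) + i2) -> i1 = i2) ->
  (forall c : 'I_k, count (fun y => F y == c) (iota 0 (t * (k - l))) = sizes c) ->
  kpartite_lcycle k l t sizes.
Proof.
move=> l_lt_k m_ge F_lt F_mod F_inj sizesE.
split=> [j _|]; first by rewrite card_cyc_edge ?card_cyc_edge_meet.
pose col (v : 'I_(t * (k - l))) : 'I_k := Ordinal (F_lt v).
exists col; split=> [j _ c|c].
  apply: (@cyc_edge_rainbow _ _ _ l_lt_k m_ge) => {}j i1 i2 /(congr1 val) /=; rewrite !F_mod.
  by move/F_inj => /(_ (ltn_ord i1) (ltn_ord i2)) /val_inj.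
by rewrite -sizesE -card_set_val_iota; congr #|_|; apply/setP => v; rewrite !inE.
Qed.

Lemma kpartite_lcycle_runs k l s q a b t :
  2 <= s -> a * s + b * s.-1 = t -> s < t -> k = s.-1 * (k - l) + q -> 0 < q < k - l ->
  k.-1 %| t * (k - l) - (a + b) ->
  kpartite_lcycle k l t
    (fun c => if val c == 0 then a + b else (t * (k - l) - (a + b)) %/ k.-1).
Proof.
move=> s_ge2 t_split s_lt_t k_split /andP [q_gt0 q_lt_d] k1_dvd.
have s_le_t := ltnW s_lt_t.
have l_lt_k : l < k by lia.
apply: (@kpartite_lcycle_colouring _ _ _ (colour k (k - l) q s a t)) => //.
- have : s.+1 * (k - l) <= t * (k - l) by rewrite leq_mul2r s_lt_t orbT.
  by rewrite k_split mulSnr -[s in s * _](prednK (ltnW s_ge2)) mulSnr; lia.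
- exact: (colour_lt s_ge2 t_split s_le_t k_split q_gt0 q_lt_d k1_dvd).
- exact: (colour_modn s_ge2 t_split s_le_t k_split q_gt0 q_lt_d k1_dvd).
- exact: (colour_window_inj s_ge2 t_split s_le_t k_split q_gt0 q_lt_d k1_dvd).
move=> c; case: eqP => [->|/eqP c_ne0].
  exact: (count_colour0 k s_ge2 t_split s_le_t q_gt0 q_lt_d).
by apply: (count_colour s_ge2 t_split s_le_t k_split q_gt0 q_lt_d k1_dvd); rewrite ?lt0n.
Qed.

Lemma ceil_div_ndvd k d : 0 < d -> ~~ (d %| k) -> ceil_div k d = (k %/ d).+1.
Proof.
move=> d_gt0; rewrite /dvdn -lt0n /ceil_div => r_gt0.
have -> : k + d.-1 = (k %/ d).+1 * d + (k %% d).-1.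
  by rewrite mulSnr {1}(divn_eq k d); lia.
have r_lt : (k %% d).-1 < d by have := ltn_pmod k d_gt0; lia.
by rewrite divnMDl // (divn_small r_lt) addn0.
Qed.

Lemma ceil_div_decomp k d : 0 < d -> d < k -> ~~ (d %| k) ->
  let s := ceil_div k d in [/\ 2 <= s, k = s.-1 * d + k %% d & 0 < k %% d < d].
Proof.
move=> d_gt0 d_lt k_ndvd; rewrite /= (ceil_div_ndvd d_gt0 k_ndvd).
split; [by rewrite ltnS divn_gt0 // ltnW | exact: divn_eq |].
by rewrite lt0n ltn_mod d_gt0 andbT.
Qed.

Lemma ceil_div_bounds t s : 0 < s -> t <= ceil_div t s * s <= t + s.-1.
Proof.
move=> s_gt0; have := divn_eq (t + s.-1) s; have := ltn_pmod (t + s.-1) s_gt0.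
rewrite /ceil_div; lia.
Qed.

Lemma exists_congr_window K n0 x : 0 < K -> exists2 n, n0 <= n < n0 + K & n = x %[mod K].
Proof.
move=> K_gt0; exists (n0 + (x + (K - n0 %% K)) %% K).
  by rewrite leq_addr ltn_add2l ltn_mod.
rewrite modnDmr.
have -> : n0 + (x + (K - n0 %% K)) = n0 %/ K * K + (K + x).
  by have := divn_eq n0 K; have := ltn_pmod n0 K_gt0; lia.
by rewrite modnMDl modnDl.
Qed.

Lemma mulnpred m n : 0 < n -> m * n = m * n.-1 + m.
Proof. by case: n => // n _; rewrite mulnS addnC. Qed.

Lemma run_split n s t : 0 < s -> t <= n * s -> n * s.-1 <= t ->
  exists a b, a * s + b * s.-1 = t /\ b = n * s - t /\ a + b = n.
Proof.
move=> s_gt0 t_le t_ge; exists (n - (n * s - t)), (n * s - t).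
have nsE := mulnpred n s_gt0.
have b_le : n * s - t <= n by lia.
split; last by split => //; rewrite subnK.
have bsE := mulnpred (n * s - t) s_gt0.
rewrite mulnBl; have : (n * s - t) * s <= n * s by rewrite leq_mul2r b_le orbT.
lia.
Qed.

Lemma runs_window_bounds k s t n0 n : 1 < s -> (k + 1) * s * s <= t ->
  n0 * s <= t + s.-1 -> n < n0 + k.-1 -> n * s.-1 <= t /\ n * s - t <= k.-1 * s.
Proof. by move=> *; split; nia. Qed.

Lemma exists_runs k s d t : 2 <= s -> 2 <= k -> 0 < d -> (k + 1) * s * s <= t ->
  exists a b, [/\ a * s + b * s.-1 = t, a + b <= t * d, k.-1 %| t * d - (a + b),
                (a + b) * s = t + b & b <= k.-1 * s].
Proof.
move=> s_ge2 k_ge2 d_gt0 t_ge.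
have /andP [n0_lo n0_hi] := ceil_div_bounds t (ltnW s_ge2).
have k1_gt0 : 0 < k.-1 by rewrite -subn1 subn_gt0.
have [n /andP [n_ge n_lt] n_mod] := exists_congr_window (ceil_div t s) (t * d) k1_gt0.
have n_ge_t : t <= n * s by apply: leq_trans n0_lo _; rewrite leq_mul2r n_ge orbT.
have [n_le b_le] := runs_window_bounds s_ge2 t_ge n0_hi n_lt.
have n_le_td : n <= t * d.
  by apply: leq_trans (leq_trans (leq_pmulr n _) n_le) (leq_pmulr t d_gt0); lia.
have [a [b [t_split [bE abE]]]] := run_split (ltnW s_ge2) n_ge_t n_le.
exists a, b; split; rewrite ?abE //; first by rewrite -eqn_mod_dvd // n_mod.
  by rewrite bE subnKC.
by rewrite bE.
Qed.

Local Open Scope ring_scope.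

Lemma eventually_le_mul_nat (R : archiFieldType) (c eps : R) : 0 <= c -> 0 < eps ->
  exists t0 : nat, forall t : nat, (t0 <= t)%N -> c <= eps * t%:R.
Proof.
move=> c_ge0 eps_gt0; exists (Num.Def.archi_bound (c / eps)) => t t_ge.
rewrite -ler_pdivrMl // mulrC; apply/ltW/(lt_le_trans (archi_boundP _)).
  by rewrite divr_ge0 // ltW.
by rewrite ler_nat.
Qed.

Lemma lambda_kl_density (R : realType) k l s n b t (eps : R) :
  s = ceil_div k (k - l) -> (l < k)%N -> (0 < s)%N -> (0 < t)%N ->
  (n * s = t + b)%N -> (b <= k.-1 * s)%N -> 0 < eps -> k.-1%:R <= eps * t%:R ->
  `|n%:R / (t * (k - l))%:R - lambda_kl k l| <= eps.
Proof.
move=> sE l_lt_k s_gt0 t_gt0 nsE b_le eps_gt0 k1_le.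
rewrite /lambda_kl -sE !natrM.
have d_gt0 : 0 < (k - l)%:R :> R by rewrite ltr0n subn_gt0.
have s_gt0' : 0 < s%:R :> R by rewrite ltr0n.
have t_gt0' : 0 < t%:R :> R by rewrite ltr0n.
have -> : n%:R / (t%:R * (k - l)%:R) - 1 / (s%:R * (k - l)%:R) =
          (n%:R * s%:R - t%:R) / (t%:R * s%:R * (k - l)%:R) :> R.
  by field; rewrite !gt_eqF.
rewrite -natrM nsE natrD addrAC subrr add0r.
have tsd_gt0 : 0 < t%:R * s%:R * (k - l)%:R :> R by rewrite !mulr_gt0.
rewrite ger0_norm; last by rewrite divr_ge0 // ltW.
rewrite ler_pdivrMr //.
have b_le' : b%:R <= k.-1%:R * s%:R :> R by rewrite -natrM ler_nat.
have k1_le' : k.-1%:R * s%:R <= eps * (t%:R * s%:R) :> R by rewrite mulrA ler_pM2r.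
have : eps * (t%:R * s%:R) <= eps * (t%:R * s%:R * (k - l)%:R).
  by rewrite ler_pM2l // ler_peMr ?mulr_ge0 ?ler1n ?subn_gt0.
lra.
Qed.

Lemma complement_density (R : realFieldType) (n m K : nat) (lam eps : R) :
  (0 < m)%N -> (0 < K)%N -> (n <= m)%N -> (K %| m - n)%N ->
  `|n%:R / m%:R - lam| <= eps ->
  `|((m - n) %/ K)%:R / m%:R - (1 - lam) / K%:R| <= eps.
Proof.
move=> m_gt0 K_gt0 n_le K_dvd close.
have m_gt0' : 0 < m%:R :> R by rewrite ltr0n.
have K_ge1 : 1 <= K%:R :> R by rewrite ler1n.
rewrite natf_div // natrB //.
have -> : (m%:R - n%:R) / K%:R / m%:R - (1 - lam) / K%:R = (lam - n%:R / m%:R) / K%:R :> R.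
  by field; rewrite !gt_eqF // (lt_le_trans ltr01).
rewrite normrM [`|_^-1|]ger0_norm ?invr_ge0 ?ler0n // distrC ler_pdivrMr ?(lt_le_trans ltr01) //.
have := normr_ge0 (n%:R / m%:R - lam); nra.
Qed.

Theorem corollary3p5 (R : realType) (k l : nat) (eps : R) :
  (1 <= l)%N -> (l <= k - 1)%N -> ~~ ((k - l) %| k)%N -> 0 < eps ->
  exists t0 : nat, forall t : nat, (t0 <= t)%N ->
    exists sizes : 'I_k -> nat,
      kpartite_lcycle k l t sizes /\
      forall i : 'I_k,
        let alpha : R := (sizes i)%:R / (t * (k - l))%:R in
        if val i == 0%N then `|alpha - lambda_kl k l| <= eps
        else `|alpha - (1 - lambda_kl k l) / (k - 1)%:R| <= eps.
Proof.
move=> l_ge1 l_le k_ndvd eps_gt0.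
have k_ge2 : (2 <= k)%N by lia.
have l_lt_k : (l < k)%N by lia.
have d_gt0 : (0 < k - l)%N by rewrite subn_gt0.
have [] := ceil_div_decomp d_gt0 (_ : k - l < k)%N k_ndvd; first lia.
set s := ceil_div k (k - l) => s_ge2 k_split q_bounds.
have [t1 t1_large] := eventually_le_mul_nat (ler0n R k.-1) eps_gt0.
exists (maxn ((k + 1) * s * s) t1) => t; rewrite geq_max => /andP [t_ge /t1_large k1_le].
have [a [b [t_split ab_le k1_dvd nsE b_le]]] := exists_runs s_ge2 k_ge2 d_gt0 t_ge.
have s_lt_t : (s < t)%N.
  have s_lt_ss : (s < s * s)%N by rewrite ltn_Pmull // ltnW.
  by apply: leq_trans s_lt_ss (leq_trans _ t_ge); rewrite -mulnA leq_pmull ?addn1.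
have t_gt0 : (0 < t)%N := leq_ltn_trans (leq0n s) s_lt_t.
exists (fun c => if val c == 0%N then (a + b)%N else ((t * (k - l) - (a + b)) %/ k.-1)%N).
split; first exact: kpartite_lcycle_runs s_ge2 t_split s_lt_t k_split q_bounds k1_dvd.
have zero_density := lambda_kl_density erefl l_lt_k (ltnW s_ge2) t_gt0 nsE b_le eps_gt0 k1_le.
move=> i /=; case: ifP => i0; rewrite i0 // subn1.
have m_gt0 : (0 < t * (k - l))%N by rewrite muln_gt0 t_gt0.
have k1_gt0 : (0 < k.-1)%N by rewrite -subn1 subn_gt0.
exact: complement_density zero_density.
Qed.
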